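(* In the setting described in the context, for $n\ge1$ let $u_n=\min\{x\in[d,v]: f^{2n}(x)=d\}$, and for $n\ge1$, $i\ge1$ let $u'_{n,i}=\max\{x\in[u_{n+1},u_n]: f^{2n+2i}(x)=d\}$ (these sets are nonempty). Then for each $n\ge1$ and $i\ge1$, on the interval $[u'_{n,i},u_n]$ the map $f$ has no periodic points whose least period is odd and $\le 2n+2i+1$, and no periodic points whose least period is even and $\le 2n+2i$ except points of least period $2n+2i$ and possibly points of least period $2n$.
   Context: Let $I$ be a compact interval and $f:I\to I$ continuous; $f^1=f$, $f^n=f\circ f^{n-1}$. A point $x_0$ is a periodic point of least period $k$ (a period-$k$ point) if $f^k(x_0)=x_0$ and $f^i(x_0)\ne x_0$ for $0<i<k$. Let $m\ge3$ be odd and let $P$ be a periodic orbit of $f$ of least period $m$. Put $e=f^{m-1}(\min P)$. Let $v\in[\min P,e)$ be a point with $f(v)=e$, and let $z\in(v,e)$ be a fixed point of $f$ (such points exist). Define $z_0=\min\{x\in[v,z]: f^2(x)=x\}$ and $d=\max\{x\in[\min P,v]: f^2(x)=z_0\}$ (both sets are nonempty). *)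

From Stdlib Require Import Reals Lra Lia.
Open Scope R_scope.

Definition iter (f : R -> R) (n : nat) (x : R) : R := Nat.iter n f x.

(* f : I -> I continuous on the compact interval I = [a,b] (f is given as a
   function on R, only its values on [a,b] matter). *)
Definition maps_into (f : R -> R) (a b : R) : Prop :=
  forall x, a <= x <= b -> a <= f x <= b.

Definition continuous_on (f : R -> R) (a b : R) : Prop :=
  forall x, a <= x <= b -> forall eps, 0 < eps ->
    exists delta, 0 < delta /\
      forall y, a <= y <= b -> Rabs (y - x) < delta -> Rabs (f y - f x) < eps.

Definition least_period (f : R -> R) (k : nat) (x0 : R) : Prop :=
  (0 < k)%nat /\ iter f k x0 = x0 /\
  forall i : nat, (0 < i < k)%nat -> iter f i x0 <> x0.

Definition is_min (S : R -> Prop) (m : R) : Prop := S m /\ forall y, S y -> m <= y.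
Definition is_max (S : R -> Prop) (m : R) : Prop := S m /\ forall y, S y -> y <= m.

From Stdlib Require Import Reals Lra Lia.
Open Scope R_scope.

(* Minimality of u_N and
   maximality of d and of u'_{n,i} force the even iterates f^{2j}(x),
   j <= n+i, of a point x of [u'_{n,i}, u_n] to stay in (d, z0), and above v
   except at j = 0, n, n+i.  A shorter even period 2q would therefore give
   f^{2q}(x) = x <= v < f^{2q}(x); a shorter odd period would make f(x) one of
   these even iterates, hence below z0, whereas f maps (d, v] above z0. *)

Definition clamp (a b x : R) : R := Rmax a (Rmin b x).

Lemma clamp_in a b x : a <= b -> a <= clamp a b x <= b.
Proof. intros. unfold clamp, Rmax, Rmin. repeat destruct Rle_dec; lra. Qed.

Lemma clamp_id a b x : a <= x <= b -> clamp a b x = x.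
Proof. intros. unfold clamp, Rmax, Rmin. repeat destruct Rle_dec; lra. Qed.

Lemma clamp_lip a b x y : a <= b -> Rabs (clamp a b x - clamp a b y) <= Rabs (x - y).
Proof.
  intros. unfold clamp, Rmax, Rmin.
  repeat destruct Rle_dec; unfold Rabs; repeat destruct Rcase_abs; lra.
Qed.

(* Extending h by clamping to [a, b] makes it continuous on all of R. *)
Lemma continuous_on_ivt (h : R -> R) (a b l r y : R) :
  continuous_on h a b -> a <= l -> l <= r -> r <= b ->
  (h l - y) * (h r - y) <= 0 -> exists c, l <= c <= r /\ h c = y.
Proof.
  intros Hc Hal Hlr Hrb Hs.
  assert (Hab : a <= b) by lra.
  set (F := fun t => h (clamp a b t) - y).
  assert (HF : continuity F).
  { intros x0 eps Heps.
    destruct (Hc (clamp a b x0) (clamp_in a b x0 Hab) eps Heps) as [del [Hdel Hd]].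
    exists del. split; [exact Hdel|]. intros x1 [_ Hx1]. simpl in *. unfold R_dist in *.
    unfold F. replace (h (clamp a b x1) - y - (h (clamp a b x0) - y))
      with (h (clamp a b x1) - h (clamp a b x0)) by ring.
    apply Hd; [apply clamp_in; exact Hab|].
    eapply Rle_lt_trans; [apply clamp_lip; exact Hab | exact Hx1]. }
  destruct (IVT_cor F l r HF Hlr) as [c [Hc1 Hc2]].
  { unfold F. rewrite !clamp_id by lra. exact Hs. }
  exists c. split; [exact Hc1|]. unfold F in Hc2. rewrite clamp_id in Hc2 by lra. lra.
Qed.

Lemma continuous_on_sub_id (h : R -> R) (a b : R) :
  continuous_on h a b -> continuous_on (fun t => h t - t) a b.
Proof.
  intros Hc x Hx eps Heps.
  destruct (Hc x Hx (eps / 2) ltac:(lra)) as [d1 [Hd1 H1]].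
  exists (Rmin d1 (eps / 2)). split; [apply Rmin_pos; lra|].
  intros y Hy Hxy.
  assert (A := H1 y Hy (Rlt_le_trans _ _ _ Hxy (Rmin_l _ _))).
  assert (B : Rabs (y - x) < eps / 2) by (eapply Rlt_le_trans; [exact Hxy | apply Rmin_r]).
  replace (h y - y - (h x - x)) with ((h y - h x) - (y - x)) by ring.
  eapply Rle_lt_trans; [apply Rabs_triang|]. rewrite Rabs_Ropp. lra.
Qed.

Lemma iter_S (f : R -> R) n x : iter f (S n) x = f (iter f n x).
Proof. reflexivity. Qed.

Lemma iter_add (f : R -> R) p q x : iter f (p + q) x = iter f p (iter f q x).
Proof.
  induction p as [|p IH]; [reflexivity|].
  rewrite Nat.add_succ_l, !iter_S, IH. reflexivity.
Qed.

Lemma iter_even_add (f : R -> R) p q x :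
  iter f (2 * (p + q)) x = iter f (2 * p) (iter f (2 * q) x).
Proof. rewrite <- iter_add. f_equal. lia. Qed.

Lemma iter_mul_period (f : R -> R) k x : iter f k x = x -> forall c, iter f (c * k) x = x.
Proof.
  intros H c. induction c as [|c IH]; [reflexivity|].
  rewrite Nat.mul_succ_l, iter_add, H, IH. reflexivity.
Qed.

Lemma maps_into_iter f a b : maps_into f a b ->
  forall n x, a <= x <= b -> a <= iter f n x <= b.
Proof.
  intros Hm n. induction n as [|n IH]; intros x Hx; [exact Hx|].
  rewrite iter_S. apply Hm, IH, Hx.
Qed.

Lemma continuous_on_iter f a b : maps_into f a b -> continuous_on f a b ->
  forall n, continuous_on (iter f n) a b.
Proof.
  intros Hm Hc n. induction n as [|n IH]; intros x Hx eps Heps.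
  - exists eps. split; [exact Heps|]. intros y _ H. exact H.
  - destruct (Hc (iter f n x) (maps_into_iter f a b Hm n x Hx) eps Heps) as [d1 [Hd1 H1]].
    destruct (IH x Hx d1 Hd1) as [d2 [Hd2 H2]].
    exists d2. split; [exact Hd2|]. intros y Hy Hxy. rewrite !iter_S.
    apply H1; [apply maps_into_iter; assumption | apply H2; assumption].
Qed.

(* f^{m-2}(p) = f^{m-1}(f^{m-1}(p)) = f^{m-1}(f(p)) = p. *)
Lemma least_period_f_neq_pred (f : R -> R) (m : nat) (p : R) :
  (3 <= m)%nat -> least_period f m p -> f p <> iter f (m - 1) p.
Proof.
  intros Hm [_ [Hp Hmin]] E.
  apply (Hmin (m - 2)%nat); [lia|].
  transitivity (iter f (m - 2) (iter f m p)); [rewrite Hp; reflexivity|].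
  rewrite <- iter_add. replace (m - 2 + m)%nat with ((m - 1) + (m - 1))%nat by lia.
  rewrite iter_add, <- E. change (f p) with (iter f 1 p).
  rewrite <- iter_add. replace (m - 1 + 1)%nat with m by lia. exact Hp.
Qed.

Section Gap.

Variables (a b : R) (f : R -> R).
Hypothesis f_maps : maps_into f a b.
Hypothesis f_cont : continuous_on f a b.

Variables p0 e v z z0 d : R.
Hypothesis a_le_p0 : a <= p0.
Hypothesis e_le_b : e <= b.
Hypothesis p0_lt_v : p0 < v.
Hypothesis z_lt_e : z < e.
Hypothesis fv : f v = e.
Hypothesis fe : f e = p0.
Hypothesis z0_min : is_min (fun x => v <= x <= z /\ iter f 2 x = x) z0.
Hypothesis d_max : is_max (fun x => p0 <= x <= v /\ iter f 2 x = z0) d.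

Let iter_cont n : continuous_on (iter f n) a b := continuous_on_iter f a b f_maps f_cont n.

Lemma iter2_v : iter f 2 v = p0.
Proof. change (f (f v) = p0). rewrite fv. exact fe. Qed.

Lemma iter2_z0 : iter f 2 z0 = z0.
Proof. exact (proj2 (proj1 z0_min)). Qed.

Lemma iter2_d : iter f 2 d = z0.
Proof. exact (proj2 (proj1 d_max)). Qed.

Lemma d_range : p0 <= d <= v.
Proof. exact (proj1 (proj1 d_max)). Qed.

Lemma z0_range : v < z0 <= z.
Proof.
  destruct z0_min as [[[Hvz0 Hz0z] Hf] _]. split; [|exact Hz0z].
  destruct (Rle_lt_or_eq_dec v z0 Hvz0) as [H|H]; [exact H|].
  rewrite <- H, iter2_v in Hf. lra.
Qed.

Lemma iter_even_z0 l : iter f (2 * l) z0 = z0.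
Proof.
  induction l as [|l IH]; [reflexivity|].
  replace (S l) with (1 + l)%nat by lia. rewrite iter_even_add, IH. exact iter2_z0.
Qed.

Lemma iter_even_d j : (1 <= j)%nat -> iter f (2 * j) d = z0.
Proof.
  intros Hj. replace j with ((j - 1) + 1)%nat by lia.
  rewrite iter_even_add. change (iter f (2 * 1) d) with (iter f 2 d).
  rewrite iter2_d. apply iter_even_z0.
Qed.

(* On (d, v] the graph of f^2 cannot cross the level z0 by maximality of d; on
   (v, z0) it stays below the diagonal by minimality of z0. *)
Lemma iter2_lt_z0 w : d < w < z0 -> iter f 2 w < z0.
Proof.
  intros Hw. destruct z0_range as [Hvz0 Hz0z], d_range as [Hp0d Hdv].
  destruct (Rle_lt_dec w v) as [Hwv|Hvw].
  - apply Rnot_le_lt. intro H.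
    destruct (continuous_on_ivt (iter f 2) a b w v z0) as [s [Hs E]]; try lra.
    { apply iter_cont. }
    { rewrite iter2_v. nra. }
    assert (s <= d) by (apply (proj2 d_max); split; [lra | exact E]). lra.
  - destruct (Rlt_le_dec (iter f 2 w) w) as [H|H]; [lra|]. exfalso.
    destruct (continuous_on_ivt (fun t => iter f 2 t - t) a b v w 0) as [r [Hr E]]; try lra.
    { apply continuous_on_sub_id, iter_cont. }
    { rewrite iter2_v. nra. }
    assert (z0 <= r) by (apply (proj2 z0_min); split; lra). lra.
Qed.

Lemma z0_le_f_z0 : z0 <= f z0.
Proof.
  destruct z0_range as [Hvz0 Hz0z]. apply Rnot_lt_le. intro H.
  destruct (continuous_on_ivt (fun t => f t - t) a b v z0 0) as [r [Hr E]]; try lra.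
  { apply continuous_on_sub_id, f_cont. }
  { rewrite fv. nra. }
  assert (Hfr : f r = r) by lra.
  assert (z0 <= r).
  { apply (proj2 z0_min). split; [lra|]. change (f (f r) = r). rewrite !Hfr. reflexivity. }
  replace r with z0 in Hfr by lra. lra.
Qed.

(* A point c of [z0, e] with f c = z0 exists; f t <= z0 would give a preimage
   of c in [t, v], i.e. a point of (d, v] sent to z0 by f^2. *)
Lemma z0_lt_f t : d < t <= v -> z0 < f t.
Proof.
  intros Ht.
  destruct z0_range as [Hvz0 Hz0z], d_range as [Hp0d Hdv].
  pose proof z0_le_f_z0 as Hfz0.
  destruct (continuous_on_ivt f a b z0 e z0) as [c [Hc Ec]]; try lra.
  { exact f_cont. }
  { rewrite fe. nra. }
  apply Rnot_le_lt. intro H.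
  destruct (continuous_on_ivt f a b t v c) as [s [Hs Es]]; try lra.
  { exact f_cont. }
  { rewrite fv. nra. }
  assert (s <= d).
  { apply (proj2 d_max). split; [lra|]. change (f (f s) = z0). rewrite Es. exact Ec. }
  lra.
Qed.

(* After reaching d an orbit is absorbed by z0, and z0 <> d. *)
Lemma periodic_iter_even_neq_d x k j :
  (0 < k)%nat -> iter f k x = x -> iter f (2 * j) x <> d.
Proof.
  intros Hk Hx E.
  assert (Ez0 : iter f (2 * S j) x = z0).
  { replace (S j) with (1 + j)%nat by lia. rewrite iter_even_add, E. exact iter2_d. }
  assert (Hxz0 : x = z0).
  { rewrite <- (iter_mul_period f k x Hx (2 * S j)).
    replace (2 * S j * k)%nat with (2 * (S j * k - S j + S j))%nat by nia.
    rewrite iter_even_add, Ez0. apply iter_even_z0. }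
  rewrite Hxz0, iter_even_z0 in E.
  destruct z0_range as [Hvz0 Hz0z], d_range as [Hp0d Hdv]. lra.
Qed.

Lemma iter_even_lt_z0 x N : x < z0 ->
  (forall j, (j <= N)%nat -> d < iter f (2 * j) x) ->
  forall j, (j <= S N)%nat -> iter f (2 * j) x < z0.
Proof.
  intros Hx Hlow j. induction j as [|j IH]; intros Hj; [exact Hx|].
  replace (S j) with (1 + j)%nat by lia. rewrite iter_even_add.
  apply iter2_lt_z0. split; [apply Hlow | apply IH]; lia.
Qed.

Lemma no_short_odd_period x k N : d < x <= v ->
  (forall j, (j <= N)%nat -> d < iter f (2 * j) x) ->
  iter f k x = x -> Nat.odd k = true -> (k <= 2 * N + 1)%nat -> False.
Proof.
  intros Hx Hlow Hk Hodd HkN.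
  apply Nat.odd_spec in Hodd. destruct Hodd as [h Hh].
  assert (Efx : iter f (2 * S h) x = f x).
  { replace (2 * S h)%nat with (S k) by lia. rewrite iter_S, Hk. reflexivity. }
  assert (iter f (2 * S h) x < z0).
  { destruct z0_range as [Hvz0 Hz0z]. apply (iter_even_lt_z0 x N); [lra | exact Hlow | lia]. }
  pose proof (z0_lt_f x Hx). lra.
Qed.

Variables (u : nat -> R) (u' : nat -> nat -> R).
Hypothesis u_min : forall n : nat, (1 <= n)%nat ->
  is_min (fun x => d <= x <= v /\ iter f (2 * n) x = d) (u n).
Hypothesis u'_max : forall n i : nat, (1 <= n)%nat -> (1 <= i)%nat ->
  is_max (fun x => u (S n) <= x <= u n /\ iter f (2 * n + 2 * i) x = d) (u' n i).

Lemma u_spec N : (1 <= N)%nat -> d < u N <= v /\ iter f (2 * N) (u N) = d.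
Proof.
  intros HN. destruct (u_min N HN) as [[[Hdu Huv] Hf] _]. split; [|exact Hf].
  split; [|exact Huv].
  destruct (Rle_lt_or_eq_dec d (u N) Hdu) as [H|H]; [exact H|].
  rewrite <- H, iter_even_d in Hf by exact HN.
  destruct z0_range as [Hvz0 Hz0z], d_range as [Hp0d Hdv]. lra.
Qed.

(* Nonemptiness of the sets defining u' n 1 forces u (S n) <= u n. *)
Lemma u_antitone j N : (1 <= j)%nat -> (j <= N)%nat -> u N <= u j.
Proof.
  intros Hj HjN. induction HjN as [|N HjN IH]; [lra|].
  destruct (u'_max N 1 ltac:(lia) (le_n 1)) as [[Hr _] _]. lra.
Qed.

Lemma iter_even_gt_d N s : (1 <= N)%nat -> d <= s < u N -> d < iter f (2 * N) s.
Proof.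
  intros HN Hs. destruct (u_spec N HN) as [[Hdu Huv] _].
  destruct z0_range as [Hvz0 Hz0z], d_range as [Hp0d Hdv].
  apply Rnot_le_lt. intro H.
  destruct (continuous_on_ivt (iter f (2 * N)) a b d s d) as [r [Hr E]]; try lra.
  { apply iter_cont. }
  { rewrite iter_even_d by exact HN. nra. }
  assert (u N <= r) by (apply (proj2 (u_min N HN)); split; [lra | exact E]). lra.
Qed.

(* Reaching v at step 2j would mean reaching p0 <= d at step 2j+2. *)
Lemma iter_even_gt_v N t j : (1 <= N)%nat -> d <= t < u N ->
  (1 <= j)%nat -> (j < N)%nat -> v < iter f (2 * j) t.
Proof.
  intros HN Ht Hj HjN. destruct z0_range as [Hvz0 Hz0z], d_range as [Hp0d Hdv].
  destruct (u_spec N HN) as [[Hdu Huv] _].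
  apply Rnot_le_lt. intro H.
  destruct (continuous_on_ivt (iter f (2 * j)) a b d t v) as [r [Hr E]]; try lra.
  { apply iter_cont. }
  { rewrite iter_even_d by exact Hj. nra. }
  assert (Ep0 : iter f (2 * S j) r = p0).
  { replace (S j) with (1 + j)%nat by lia. rewrite iter_even_add, E. exact iter2_v. }
  pose proof (u_antitone (S j) N ltac:(lia) ltac:(lia)).
  pose proof (iter_even_gt_d (S j) r ltac:(lia) ltac:(lra)). lra.
Qed.

Lemma iter_even_le_u n i x : (1 <= n)%nat -> (1 <= i)%nat ->
  u' n i <= x <= u n -> iter f (2 * n) x <= u i.
Proof.
  intros Hn Hi Hx. destruct (u'_max n i Hn Hi) as [[Hr _] Hmax].
  destruct (u_spec n Hn) as [[_ Hnv] Eun]. destruct (u_spec i Hi) as [[Hdi Hiv] Eui].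
  destruct (u_spec (S n) ltac:(lia)) as [[HdSn _] _].
  destruct z0_range as [Hvz0 Hz0z], d_range as [Hp0d Hdv].
  apply Rnot_lt_le. intro H.
  destruct (continuous_on_ivt (iter f (2 * n)) a b x (u n) (u i)) as [t [Ht Et]]; try lra.
  { apply iter_cont. }
  { rewrite Eun. nra. }
  assert (Edt : iter f (2 * n + 2 * i) t = d).
  { replace (2 * n + 2 * i)%nat with (2 * i + 2 * n)%nat by lia.
    rewrite iter_add, Et. exact Eui. }
  assert (t <= u' n i) by (apply Hmax; split; [lra | exact Edt]).
  replace t with x in Et by lra. lra.
Qed.

Lemma gap_periodic_bounds n i x k : (1 <= n)%nat -> (1 <= i)%nat ->
  u' n i <= x <= u n -> (0 < k)%nat -> iter f k x = x ->
  d < x < u n /\ d < iter f (2 * n) x < u i.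
Proof.
  intros Hn Hi Hx Hk Hper.
  destruct (u'_max n i Hn Hi) as [[Hr _] _].
  destruct (u_spec (S n) ltac:(lia)) as [[HdSn _] _].
  assert (Hxu : x < u n).
  { destruct (Rle_lt_or_eq_dec _ _ (proj2 Hx)) as [H|H]; [exact H|].
    exfalso. apply (periodic_iter_even_neq_d x k n Hk Hper).
    rewrite H. exact (proj2 (u_spec n Hn)). }
  split; [lra|]. split; [apply iter_even_gt_d; [exact Hn | lra]|].
  destruct (Rle_lt_or_eq_dec _ _ (iter_even_le_u n i x Hn Hi Hx)) as [H|H]; [exact H|].
  exfalso. apply (periodic_iter_even_neq_d x k (i + n) Hk Hper).
  rewrite iter_even_add, H. exact (proj2 (u_spec i Hi)).
Qed.

Lemma gap_iter_even_gt_d n i x : (1 <= n)%nat -> (1 <= i)%nat ->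
  d < x < u n -> d < iter f (2 * n) x < u i ->
  forall j, (j <= n + i)%nat -> d < iter f (2 * j) x.
Proof.
  intros Hn Hi Hx Hy j Hj.
  destruct (Nat.eq_dec j 0) as [->|Hj0]; [exact (proj1 Hx)|].
  destruct (Nat.le_gt_cases j n) as [Hjn|Hjn].
  - apply iter_even_gt_d; [lia|]. pose proof (u_antitone j n ltac:(lia) Hjn). lra.
  - replace j with ((j - n) + n)%nat by lia. rewrite iter_even_add.
    apply iter_even_gt_d; [lia|]. pose proof (u_antitone (j - n) i ltac:(lia) ltac:(lia)). lra.
Qed.

Lemma gap_odd_period n i x k : (1 <= n)%nat -> (1 <= i)%nat ->
  u' n i <= x <= u n -> least_period f k x ->
  Nat.odd k = true -> (2 * n + 2 * i + 1 < k)%nat.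
Proof.
  intros Hn Hi Hx [Hk [Hper _]] Hodd.
  destruct (gap_periodic_bounds n i x k Hn Hi Hx Hk Hper) as [Hxb Hyb].
  destruct (Nat.lt_ge_cases (2 * n + 2 * i + 1) k) as [Hlt|Hge]; [exact Hlt|].
  exfalso. destruct (u_spec n Hn) as [[_ Huv] _].
  apply (no_short_odd_period x k (n + i)); [lra | | exact Hper | exact Hodd | lia].
  exact (gap_iter_even_gt_d n i x Hn Hi Hxb Hyb).
Qed.

Lemma gap_even_period n i x k : (1 <= n)%nat -> (1 <= i)%nat ->
  u' n i <= x <= u n -> least_period f k x ->
  Nat.even k = true -> (k <= 2 * n + 2 * i)%nat ->
  k = (2 * n + 2 * i)%nat \/ k = (2 * n)%nat.
Proof.
  intros Hn Hi Hx [Hk [Hper _]] Heven Hkle.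
  destruct (gap_periodic_bounds n i x k Hn Hi Hx Hk Hper) as [Hxb Hyb].
  destruct (u_spec n Hn) as [[_ Huv] _].
  apply Nat.even_spec in Heven. destruct Heven as [q ->].
  destruct (Nat.lt_trichotomy q n) as [Hqn|[->|Hqn]].
  - exfalso. pose proof (iter_even_gt_v n x q Hn ltac:(lra) ltac:(lia) Hqn). lra.
  - right. reflexivity.
  - destruct (Nat.eq_dec q (n + i)) as [->|Hqni]; [left; lia|]. exfalso.
    pose proof (iter_even_gt_v i (iter f (2 * n) x) (q - n) Hi ltac:(lra) ltac:(lia) ltac:(lia))
      as H.
    rewrite <- iter_even_add in H. replace (q - n + n)%nat with q in H by lia. lra.
Qed.

End Gap.

Theorem lemma8
  (a b : R) (f : R -> R) (m : nat) (p0 e v z z0 d : R)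
  (u : nat -> R) (u' : nat -> nat -> R) :
  a <= b ->
  maps_into f a b ->
  continuous_on f a b ->
  (3 <= m)%nat -> Nat.odd m = true ->
  (* P = {f^i(p0)} is a periodic orbit of least period m, with p0 = min P *)
  a <= p0 <= b ->
  least_period f m p0 ->
  (forall i : nat, p0 <= iter f i p0) ->
  e = iter f (m - 1) p0 ->
  p0 <= v < e -> f v = e ->
  v < z < e -> f z = z ->
  is_min (fun x => v <= x <= z /\ iter f 2 x = x) z0 ->
  is_max (fun x => p0 <= x <= v /\ iter f 2 x = z0) d ->
  (forall n : nat, (1 <= n)%nat ->
     is_min (fun x => d <= x <= v /\ iter f (2 * n) x = d) (u n)) ->
  (forall n i : nat, (1 <= n)%nat -> (1 <= i)%nat ->
     is_max (fun x => u (S n) <= x <= u n /\ iter f (2 * n + 2 * i) x = d) (u' n i)) ->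
  forall n i : nat, (1 <= n)%nat -> (1 <= i)%nat ->
  forall (x : R) (k : nat), u' n i <= x <= u n -> least_period f k x ->
    (Nat.odd k = true -> (2 * n + 2 * i + 1 < k)%nat) /\
    (Nat.even k = true -> (k <= 2 * n + 2 * i)%nat ->
       k = (2 * n + 2 * i)%nat \/ k = (2 * n)%nat).
Proof.
  intros _ Hmap Hcont Hm3 _ Hp0 Hper _ He Hv Hfv [_ Hze] _ Hz0 Hd Hu Hu'
    n i Hn Hi x k Hx Hk.
  assert (Hfe : f e = p0).
  { rewrite He, <- iter_S. replace (S (m - 1)) with m by lia. apply Hper. }
  assert (He_b : e <= b) by (rewrite He; apply (maps_into_iter f a b Hmap); exact Hp0).
  assert (Hp0v : p0 < v).
  { destruct (Rle_lt_or_eq_dec p0 v (proj1 Hv)) as [H|H]; [exact H|].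
    exfalso. apply (least_period_f_neq_pred f m p0 Hm3 Hper).
    rewrite H at 1. rewrite Hfv. exact He. }
  destruct Hp0 as [Hap0 _].
  split.
  - exact (gap_odd_period a b f Hmap Hcont p0 e v z z0 d Hap0 He_b Hp0v Hze Hfv Hfe
      Hz0 Hd u u' Hu Hu' n i x k Hn Hi Hx Hk).
  - exact (gap_even_period a b f Hmap Hcont p0 e v z z0 d Hap0 He_b Hp0v Hze Hfv Hfe
      Hz0 Hd u u' Hu Hu' n i x k Hn Hi Hx Hk).
Qed.
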